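(* Let $A=\mathrm{diag}([-1],G_1,\dots,G_m,[1])\in\mathbb{R}^{n\times n}$, $m\geq 1$ (each of $[-1]$, $[1]$ possibly absent), with $G_j=\begin{bmatrix}c_j&s_j\\-s_j&c_j\end{bmatrix}$, $c_j^2+s_j^2=1$, $s_j\neq0$, $-1=c_0<c_1<\cdots<c_m<1=c_{m+1}$. Let $v_0$ be a unit norm vector with $d(A,v_0)\geq 2$ such that $v_0^{(\ell)}\neq 0$ for some $1\leq\ell\leq m$ and $v_0^{(j)}\neq 0$ for some present block index $0\leq j\leq m+1$ with $c_\ell c_j\leq 0$. Then every limit vector $v_*$ of the sequence $\{v_k\}$ of the iteration ACI($1$) below satisfies $v_*^TAv_*=0$, $\|Av_*\|^2-(v_*^TAv_* )^2=1$, and $$\min_{\alpha\in\mathbb{R}}\|A-\alpha I\|=\|A\|=\|Av_*\|=1.$$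
   Context: Block partitioning: $v=[v^{(0)};v^{(1)};\dots;v^{(m)};v^{(m+1)}]$ with $v^{(0)}\in\mathbb{R}$ present only if the block $[-1]$ is, $v^{(j)}\in\mathbb{R}^2$ for $1\leq j\leq m$ (conforming with $G_j$), and $v^{(m+1)}\in\mathbb{R}$ present only if the block $[1]$ is. ACI($1$): for $k=0,1,2,\dots$: $\widetilde w_k=(A-\alpha_kI)v_k$ with $\alpha_k=v_k^TAv_k$; $w_k=\widetilde w_k/\|\widetilde w_k\|$; $\widetilde v_{k+1}=(A^T-\beta_kI)w_k$ with $\beta_k=w_k^TAw_k$; $v_{k+1}=\widetilde v_{k+1}/\|\widetilde v_{k+1}\|$. $d(A,v)$ is the grade of $v$ w.r.t. $A$ (degree of the monic polynomial $p$ of smallest degree with $p(A)v=0$); $\|\cdot\|$ is the Euclidean vector norm and the induced spectral matrix norm. *)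

From mathcomp Require Import all_boot all_order all_algebra.
From mathcomp Require Import boolp classical_sets reals.
Set Implicit Arguments. Unset Strict Implicit. Unset Printing Implicit Defensive.
Import Order.TTheory GRing.Theory Num.Theory.
Local Open Scope ring_scope.

Definition peval (R : comNzRingType) n (A : 'M[R]_n) (p : {poly R}) (v : 'cV[R]_n) : 'cV[R]_n :=
  \sum_(i < size p) p`_i *: (A ^+ i *m v).
Lemma peval_ex (R : comNzRingType) n (A : 'M[R]_n) v :
  exists d, `[< exists p : {poly R}, [/\ p \is monic, size p = d.+1 & peval A p v = 0] >].
Proof.
case: n A v => [|n] A v.
  exists 0; apply/asboolP; exists 1; split; rewrite ?monic1 ?size_poly1 //.
  by apply/matrixP => -[].
exists n.+1; apply/asboolP; exists (char_poly A); split.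
- exact: char_poly_monic.
- exact: size_char_poly.
have := Cayley_Hamilton A.
rewrite /horner_mx /horner_morph horner_coef => H.
rewrite size_map_inj_poly in H; last 2 first.
- by move=> a b /matrixP /(_ ord0 ord0); rewrite !mxE eqxx !mulr1n.
- by apply/matrixP=> i j; rewrite !mxE mul0rn.
rewrite /peval -[RHS](mul0mx _ v) -H mulmx_suml.
apply: eq_bigr => i _; rewrite coef_map /=.
by rewrite -mulmxE mul_scalar_mx scalemxAl.
Qed.

(* Grade d(A,v): degree of the monic polynomial p of smallest degree with p(A)v = 0. *)
Definition grade (R : comNzRingType) n (A : 'M[R]_n) (v : 'cV[R]_n) : nat :=
  ex_minn (peval_ex A v).

Definition vnorm (R : realType) n (x : 'cV[R]_n) : R := Num.sqrt (\sum_i x i ord0 ^+ 2).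

Definition opnorm (R : realType) n (M : 'M[R]_n) : R :=
  sup [set vnorm (M *m x) | x in [set x : 'cV[R]_n | vnorm x = 1]]%classic.

Definition qform (R : comNzRingType) n (M : 'M[R]_n) (x y : 'cV[R]_n) : R :=
  (x^T *m M *m y) ord0 ord0.

Definition aci_step (R : realType) n (A : 'M[R]_n) (v : 'cV[R]_n) : 'cV[R]_n :=
  let alpha := qform A v v in
  let wt := (A - alpha%:M) *m v in
  let w := (vnorm wt)^-1 *: wt in
  let beta := qform A w w in
  let vt := (A^T - beta%:M) *m w in
  (vnorm vt)^-1 *: vt.

Definition aci (R : realType) n (A : 'M[R]_n) (v0 : 'cV[R]_n) (k : nat) : 'cV[R]_n :=
  iter k (aci_step A) v0.

Definition is_limit_vector (R : realType) n (u : nat -> 'cV[R]_n) (w : 'cV[R]_n) : Prop :=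
  forall e : R, 0 < e -> forall N : nat, exists k : nat, (N <= k)%N /\ vnorm (u k - w) < e.

(* b0 : the block [-1] is present; b1 : the block [1] is present.       *)
Definition dimA (b0 : bool) (m : nat) (b1 : bool) : nat := (b0 + m.*2 + b1)%N.

(* block index (0 for [-1], j for G_j with 1<=j<=m, m+1 for [1]) of the row/column i *)
Definition blockOf (b0 : bool) (m i : nat) : nat :=
  if b0 && (i == 0)%N then 0%N
  else let i' := (i - b0)%N in if (i' < m.*2)%N then (i'./2).+1 else m.+1.

(* position (false = first, true = second) of i inside its block *)
Definition posOf (b0 : bool) (m i : nat) : bool :=
  if b0 && (i == 0)%N then false
  else let i' := (i - b0)%N in if (i' < m.*2)%N then odd i' else false.

Definition cext (R : numDomainType) (m : nat) (c : nat -> R) (j : nat) : R :=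
  if j == 0%N then -1 else if j == m.+1 then 1 else c j.

Definition Amat (R : numDomainType) (b0 : bool) (m : nat) (b1 : bool) (c s : nat -> R)
  : 'M[R]_(dimA b0 m b1) :=
  \matrix_(i, k)
    if blockOf b0 m i == blockOf b0 m k then
      let j := blockOf b0 m i in
      if posOf b0 m i == posOf b0 m k then cext m c j
      else if ~~ posOf b0 m i then s j else - s j
    else 0.

Definition blk_nz (R : numDomainType) (b0 : bool) (m : nat) (b1 : bool)
  (v : 'cV[R]_(dimA b0 m b1)) (j : nat) : Prop :=
  exists i : 'I_(dimA b0 m b1), blockOf b0 m i = j /\ v i ord0 != 0.

From mathcomp Require Import all_boot all_order all_algebra.
From mathcomp Require Import boolp classical_sets reals.
From mathcomp Require Import functions topology normedtype derive realfun exp.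
From mathcomp Require Import ring lra zify.
Import Order.TTheory GRing.Theory Num.Theory numFieldNormedType.Exports.
Local Open Scope ring_scope.
Set Implicit Arguments. Unset Strict Implicit. Unset Printing Implicit Defensive.

(* [A] is orthogonal, [A + A^T = 2 D] with [D = diag(d)], [d_i = c_(block of i)], and
   [A] commutes with every diagonal matrix that is constant on its blocks.  Hence
   [||(A - a I) u||^2] only depends on the masses [W_c(u)] of [u] on the level sets
   [{d = c}], and a half-step [u |-> (B - a I) u / ||(B - a I) u||] with [B = A] or [A^T]
   and [a = u^T B u = u^T D u] multiplies [W_c] by [(1 + a^2 - 2 a c) / (1 - a^2)]
   while not increasing [|a|].  Two occupied levels [x <= 0 <= y] give a potential
   [lam ln W_x + mu ln W_y <= 0] that would grow by a fixed [delta > 0] at every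
   half-step with [|a| >= L]; so the Rayleigh quotients tend to [0], and every limit
   vector [v] is a unit vector with [v^T A v = 0] and [||A v|| = 1].  Finally
   [||A - alpha I|| >= 1] is witnessed by a coordinate vector [e_i] with
   [alpha d_i <= 0]. *)

Section WeightedNorm.
Variables (R : realType) (n : nat).
Implicit Types (g h : 'I_n -> R) (u : 'cV[R]_n) (B : 'M[R]_n).

Definition wnorm2 g u := \sum_i g i * u i ord0 ^+ 2.

Definition diagf g : 'M[R]_n := diag_mx (\row_i g i).

Lemma eq_wnorm2 g h u : g =1 h -> wnorm2 g u = wnorm2 h u.
Proof. by move=> gh; apply: eq_bigr => i _; rewrite gh. Qed.

Lemma wnorm2D g h u : wnorm2 (fun i => g i + h i) u = wnorm2 g u + wnorm2 h u.
Proof. by rewrite /wnorm2 -big_split; apply: eq_bigr => i _; rewrite mulrDl. Qed.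

Lemma wnorm2Zl (k : R) g u : wnorm2 (fun i => k * g i) u = k * wnorm2 g u.
Proof. by rewrite /wnorm2 mulr_sumr; apply: eq_bigr => i _; rewrite mulrA. Qed.

Lemma wnorm2Zr (k : R) g u : wnorm2 g (k *: u) = k ^+ 2 * wnorm2 g u.
Proof. by rewrite /wnorm2 mulr_sumr; apply: eq_bigr => i _; rewrite mxE; ring. Qed.

Lemma wnorm2_affine (p q : R) g u :
  wnorm2 (fun i => p + q * g i) u = p * wnorm2 (fun=> 1) u + q * wnorm2 g u.
Proof. by rewrite -!wnorm2Zl -wnorm2D; apply: eq_wnorm2 => i; rewrite mulr1. Qed.

Lemma ler_wnorm2 g h u : (forall i, g i <= h i) -> wnorm2 g u <= wnorm2 h u.
Proof. by move=> gh; apply: ler_sum => i _; apply: ler_wpM2r; rewrite ?sqr_ge0. Qed.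

Lemma wnorm2_ge0 g u : (forall i, 0 <= g i) -> 0 <= wnorm2 g u.
Proof. by move=> g0; apply: sumr_ge0 => i _; apply: mulr_ge0; rewrite ?sqr_ge0. Qed.

Lemma wnorm2_delta g i : wnorm2 g (delta_mx i ord0) = g i.
Proof.
rewrite /wnorm2 (bigD1 i) //= big1 ?addr0 => [|k /negbTE ki].
  by rewrite mxE !eqxx expr1n mulr1.
by rewrite mxE ki expr0n mulr0.
Qed.

Lemma vnorm_ge0 u : 0 <= vnorm u.
Proof. exact: sqrtr_ge0. Qed.

Lemma vnorm_sqr u : vnorm u ^+ 2 = wnorm2 (fun=> 1) u.
Proof.
rewrite sqr_sqrtr; last by apply: sumr_ge0 => i _; rewrite sqr_ge0.
by apply: eq_bigr => i _; rewrite mul1r.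
Qed.

Lemma vnorm_eq1 u : wnorm2 (fun=> 1) u = 1 -> vnorm u = 1.
Proof.
move=> u1; rewrite /vnorm (_ : \sum_i _ = 1) ?sqrtr1 // -u1.
by apply: eq_bigr => i _; rewrite mul1r.
Qed.

Lemma coord_le_vnorm u i : `|u i ord0| <= vnorm u.
Proof.
rewrite -sqrtr_sqr ler_sqrt; last by apply: sumr_ge0 => j _; rewrite sqr_ge0.
by rewrite (bigD1 i) //= lerDl; apply: sumr_ge0 => j _; rewrite sqr_ge0.
Qed.

Lemma quad_diagf g u : (u^T *m diagf g *m u) ord0 ord0 = wnorm2 g u.
Proof. by rewrite mxE; apply: eq_bigr => k _; rewrite mul_mx_diag !mxE; ring. Qed.

Lemma diagfM g h : diagf g *m diagf h = diagf (fun i => g i * h i).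
Proof.
apply/matrixP=> i j; rewrite mul_mx_diag !mxE.
by case: eqP => [->|_]; rewrite ?mulr1n ?mulr0n ?mul0r.
Qed.

Definition orth_sympart (d : 'I_n -> R) B :=
  [/\ B^T *m B = 1%:M, B + B^T = diagf (fun i => 2 * d i) &
      forall i k, B i k != 0 -> d i = d k].

Lemma orth_sympart_tr d B : orth_sympart d B -> orth_sympart d B^T.
Proof.
case=> BO BD Bd; split; first by rewrite trmxK; apply: mulmx1C.
  by rewrite trmxK addrC.
by move=> i k; rewrite mxE => /Bd ->.
Qed.

Lemma qform_tr B u : qform B^T u u = qform B u u.
Proof.
rewrite /qform (_ : u^T *m B^T *m u = (u^T *m B *m u)^T) ?mxE //.
by rewrite !trmx_mul trmxK mulmxA.
Qed.

Lemma qform_sympart d B u : B + B^T = diagf (fun i => 2 * d i) -> qform B u u = wnorm2 d u.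
Proof.
move=> BD; have : 2 * qform B u u = 2 * wnorm2 d u.
  rewrite -wnorm2Zl -quad_diagf -BD mulmxDr mulmxDl mxE.
  by rewrite -/(qform B u u) -/(qform B^T u u) qform_tr; ring.
by move/mulfI; apply; rewrite pnatr_eq0.
Qed.

Lemma orth_sympart_sqr_le1 d B i : orth_sympart d B -> d i ^+ 2 <= 1.
Proof.
case=> BO BD _.
have -> : d i = B i i.
  by have := congr1 (fun M : 'M_n => M i i) BD; rewrite !mxE eqxx mulr1n; lra.
have := congr1 (fun M : 'M_n => M i i) BO; rewrite !mxE eqxx mulr1n => <-.
rewrite (bigD1 i) //= mxE -expr2 lerDl.
by apply: sumr_ge0 => k _; rewrite mxE -expr2 sqr_ge0.
Qed.

Lemma orth_sympart_norm_le1 d B i : orth_sympart d B -> `|d i| <= 1.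
Proof.
move/(orth_sympart_sqr_le1 i) => d2.
by rewrite -(@ler_pXn2r _ 2) ?nnegrE // real_normK ?num_real // expr1n.
Qed.

Lemma wnorm2_shift d B g a u : orth_sympart d B ->
  (forall i k, B i k != 0 -> g i = g k) ->
  wnorm2 g ((B - a%:M) *m u) = wnorm2 (fun i => g i * (1 + a ^+ 2 - 2 * a * d i)) u.
Proof.
case=> BO BD _ Bg; rewrite -!quad_diagf.
have gB : diagf g *m B = B *m diagf g.
  apply/matrixP=> i k; rewrite mul_mx_diag mul_diag_mx !mxE.
  by have [->|/Bg->] := eqVneq (B i k) 0; rewrite ?mulr0 ?mul0r // mulrC.
have gBT : diagf g *m B^T = B^T *m diagf g.
  by rewrite -[diagf g]tr_diag_mx -!trmx_mul gB.
have BaBa : (B^T - a%:M) *m (B - a%:M) = diagf (fun i => 1 + a ^+ 2 - 2 * a * d i).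
  rewrite mulmxBl !mulmxBr BO !mul_mx_scalar !mul_scalar_mx.
  apply/matrixP=> i j; have := congr1 (fun M : 'M_n => M i j) BD; rewrite !mxE => Bij.
  have -> : a * B i j = a * (B i j + B j i) - a * B j i by ring.
  by rewrite Bij; case: (eqVneq i j) => [->|_]; rewrite ?eqxx ?mulr1n ?mulr0n; ring.
have BaT : (B - a%:M)^T = B^T - a%:M by rewrite linearB /= tr_scalar_mx.
have gBaT : (B^T - a%:M) *m diagf g = diagf g *m (B^T - a%:M).
  by rewrite mulmxBl mulmxBr gBT scalar_mxC.
by rewrite trmx_mul BaT -diagfM -BaBa !mulmxA -[u^T *m _ *m diagf g]mulmxA gBaT mulmxA.
Qed.

End WeightedNorm.

Section HalfStep.
Variables (R : realType) (n : nat).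
Implicit Types (d : 'I_n -> R) (u : 'cV[R]_n) (B : 'M[R]_n).

Definition half_step B u : 'cV[R]_n :=
  let x := (B - (qform B u u)%:M) *m u in (vnorm x)^-1 *: x.

Lemma aci_stepE (A : 'M[R]_n) v : aci_step A v = half_step A^T (half_step A v).
Proof. by rewrite /aci_step /half_step qform_tr. Qed.

Definition level_mass d (c : R) u := wnorm2 (fun i => (d i == c)%:R) u.

Lemma level_mass_le d c u : level_mass d c u <= wnorm2 (fun=> 1) u.
Proof. by apply: ler_wnorm2 => i; case: eqP. Qed.

Lemma level_mass_gt0_level d c u : 0 < level_mass d c u -> exists i, d i = c.
Proof.
move=> W0; apply: contrapT => /forallNP none; move: W0.
by rewrite /level_mass /wnorm2 big1 ?ltxx // => i _; case: eqP => [/none|_] //; rewrite mul0r.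
Qed.

Definition gain (a c : R) := (1 + a ^+ 2 - 2 * a * c) / (1 - a ^+ 2).

Lemma gainNN (a c : R) : gain (- a) (- c) = gain a c.
Proof. by rewrite /gain sqrrN; congr (_ / _); ring. Qed.

Lemma gain_num_gt0 (a c : R) : `|c| <= 1 -> 0 < 1 - a ^+ 2 -> 0 < 1 + a ^+ 2 - 2 * a * c.
Proof.
rewrite ler_norml => /andP [c1 c2] a1.
case: (lerP 0 a) => a0; [have : 0 <= a * (1 - c) | have : 0 <= - a * (1 + c)];
  by [apply: mulr_ge0; lra | nra].
Qed.

Lemma gain_gt0 (a c : R) : `|c| <= 1 -> 0 < 1 - a ^+ 2 -> 0 < gain a c.
Proof. by move=> c1 a1; apply: divr_gt0 => //; apply: gain_num_gt0. Qed.

Lemma ln_gain (a c : R) : `|c| <= 1 -> 0 < 1 - a ^+ 2 ->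
  ln (gain a c) = ln (1 + a ^+ 2 - 2 * a * c) - ln (1 - a ^+ 2).
Proof.
move=> c1 a1; have := gain_num_gt0 c1 a1.
by rewrite /gain => num; rewrite lnM ?posrE ?invr_gt0 // lnV ?posrE.
Qed.

Variables (d : 'I_n -> R) (B : 'M[R]_n) (u : 'cV[R]_n).
Hypotheses (dB : orth_sympart d B) (u1 : wnorm2 (fun=> 1) u = 1).

Let a := wnorm2 d u.

Lemma vnorm_shift_sqr (al : R) :
  vnorm ((B - al%:M) *m u) ^+ 2 = 1 + al ^+ 2 - 2 * al * a.
Proof.
rewrite vnorm_sqr (wnorm2_shift _ _ dB) //.
rewrite (eq_wnorm2 _ (h := fun i => (1 + al ^+ 2) + (- (2 * al)) * d i)).
  by rewrite wnorm2_affine u1 -/a; ring.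
by move=> i; ring.
Qed.

Lemma level_mass_shift (al c : R) :
  level_mass d c ((B - al%:M) *m u) = (1 + al ^+ 2 - 2 * al * c) * level_mass d c u.
Proof.
have [_ _ Bd] := dB.
rewrite /level_mass (wnorm2_shift _ _ dB) => [|i k /Bd -> //].
rewrite -wnorm2Zl; apply: eq_wnorm2 => i.
by case: eqP => [->|_]; rewrite ?mul1r ?mul0r ?mulr1 ?mulr0.
Qed.

Lemma half_stepE : half_step B u = (vnorm ((B - a%:M) *m u))^-1 *: ((B - a%:M) *m u).
Proof. by have [_ BD _] := dB; rewrite /half_step (qform_sympart _ BD). Qed.

Lemma vnorm_shift_rayleigh_sqr : vnorm ((B - a%:M) *m u) ^+ 2 = 1 - a ^+ 2.
Proof. by rewrite vnorm_shift_sqr; ring. Qed.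

Lemma level_mass_half_step c :
  level_mass d c (half_step B u) = gain a c * level_mass d c u.
Proof.
rewrite half_stepE /level_mass wnorm2Zr -/(level_mass _ _ _) level_mass_shift.
by rewrite exprVn vnorm_shift_rayleigh_sqr /gain mulrC mulrAC.
Qed.

Lemma rayleigh_lt1 z : `|z| < 1 -> 0 < level_mass d z u -> 0 < 1 - a ^+ 2.
Proof.
move=> z1 Wz; rewrite -vnorm_shift_rayleigh_sqr vnorm_sqr.
apply: lt_le_trans (level_mass_le d z ((B - a%:M) *m u)); rewrite level_mass_shift.
apply: mulr_gt0 => //; move: z1; rewrite ltr_norml => /andP [z1 z2].
by have := sqr_ge0 (a - z); nra.
Qed.

Hypothesis a1 : 0 < 1 - a ^+ 2.

Lemma half_step_unit : wnorm2 (fun=> 1) (half_step B u) = 1.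
Proof.
by rewrite half_stepE wnorm2Zr -vnorm_sqr exprVn mulVf // vnorm_shift_rayleigh_sqr gt_eqF.
Qed.

Lemma abs_rayleigh_half_step : `|wnorm2 d (half_step B u)| <= `|a|.
Proof.
have [_ _ Bd] := dB.
set m2 := wnorm2 (fun i => d i ^+ 2) u.
have wd g : wnorm2 (fun i => g * d i + (- (2 * a)) * d i ^+ 2) u = g * a - 2 * a * m2.
  by rewrite wnorm2D !wnorm2Zl -/a -/m2; ring.
have m2_ge : a ^+ 2 <= m2.
  have : 0 <= wnorm2 (fun i => (d i - a) ^+ 2) u by apply: wnorm2_ge0 => i; rewrite sqr_ge0.
  rewrite (eq_wnorm2 _ (h := fun i => a ^+ 2 + (- (2 * a)) * d i + d i ^+ 2)) => [|i]; last by ring.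
  by rewrite wnorm2D wnorm2_affine u1 -/a -/m2; lra.
have m2_le : m2 <= 1.
  by rewrite -u1; apply: ler_wnorm2 => i; apply: orth_sympart_sqr_le1 dB.
have -> : wnorm2 d (half_step B u) = a * ((1 + a ^+ 2 - 2 * m2) / (1 - a ^+ 2)).
  rewrite half_stepE wnorm2Zr exprVn vnorm_shift_rayleigh_sqr (wnorm2_shift _ _ dB) //.
  rewrite (eq_wnorm2 _ (h := fun i => (1 + a ^+ 2) * d i + (- (2 * a)) * d i ^+ 2)) => [|i].
    by rewrite wd; field; rewrite gt_eqF.
  by ring.
rewrite normrM ler_piMr // normrM normfV (gtr0_norm a1) ler_pdivrMr // mul1r.
by rewrite ler_norml; apply/andP; split; lra.
Qed.

End HalfStep.

Section LogGain.
Variable R : realType.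
Implicit Types (b x : R).

Lemma is_derive_ln_horner (P : {poly R}) x : 0 < P.[x] ->
  is_derive x 1 (@ln R \o horner P) ((deriv P).[x] / P.[x]).
Proof. by move=> Px; rewrite mulrC; apply: is_derive1_comp; apply: is_derive1_ln. Qed.

Variables s t : R.

(* [Psi b = t ln (gain b (-s)) + s ln (gain b t)] is the growth of the potential
   [t ln W_(-s) + s ln W_t] under a half-step with Rayleigh quotient [b]. *)
Definition Psi b :=
  t * ln (1 + b ^+ 2 - 2 * b * - s) + s * ln (1 + b ^+ 2 - 2 * b * t) - (s + t) * ln (1 - b ^+ 2).

Definition dPsi b :=
  t * ((2 * s + 2 * b) / (1 + b ^+ 2 - 2 * b * - s)) +
  s * ((2 * b - 2 * t) / (1 + b ^+ 2 - 2 * b * t)) -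
  (s + t) * (- (2 * b) / (1 - b ^+ 2)).

Lemma is_derive_Psi x : 0 < 1 + x ^+ 2 - 2 * x * - s -> 0 < 1 + x ^+ 2 - 2 * x * t ->
  0 < 1 - x ^+ 2 -> is_derive x 1 Psi (dPsi x).
Proof.
pose P1 : {poly R} := 'X^2 + (2 * s)%:P * 'X + 1.
pose P2 : {poly R} := 'X^2 - (2 * t)%:P * 'X + 1.
pose P3 : {poly R} := 1 - 'X^2.
have P1E b : P1.[b] = 1 + b ^+ 2 - 2 * b * - s by rewrite !hornerE; ring.
have P2E b : P2.[b] = 1 + b ^+ 2 - 2 * b * t by rewrite !hornerE; ring.
have P3E b : P3.[b] = 1 - b ^+ 2 by rewrite !hornerE.
have dP1E : (deriv P1).[x] = 2 * s + 2 * x by rewrite /P1 !poly.derivE !hornerE /=; ring.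
have dP2E : (deriv P2).[x] = 2 * x - 2 * t by rewrite /P2 !poly.derivE !hornerE /=; ring.
have dP3E : (deriv P3).[x] = - (2 * x) by rewrite /P3 !poly.derivE !hornerE /=; ring.
move=> h1 h2 h3.
have d1 := is_derive_ln_horner (P := P1) (x := x); rewrite P1E dP1E in d1.
have d2 := is_derive_ln_horner (P := P2) (x := x); rewrite P2E dP2E in d2.
have d3 := is_derive_ln_horner (P := P3) (x := x); rewrite P3E dP3E in d3.
have -> : Psi = t *: (@ln R \o horner P1) + s *: (@ln R \o horner P2)
                - (s + t) *: (@ln R \o horner P3).
  by apply/funext => b; rewrite /Psi !fctE /= P1E P2E P3E.
exact: is_deriveB (is_deriveD (is_deriveZ t (d1 h1)) (is_deriveZ s (d2 h2)))
                  (is_deriveZ (s + t) (d3 h3)).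
Qed.

Hypotheses (s0 : 0 <= s) (t1 : t <= 1) (st0 : 0 < s + t) (st1 : s * t < 1).

Lemma Psi_args_gt0 x : 0 <= x -> x < 1 ->
  [/\ 0 < 1 + x ^+ 2 - 2 * x * - s, 0 < 1 + x ^+ 2 - 2 * x * t & 0 < 1 - x ^+ 2].
Proof.
move=> x0 x1; have := mulr_ge0 x0 s0; have : x * t <= x by rewrite ler_piMr.
have : 0 < (1 - x) ^+ 2 by rewrite exprn_gt0 // subr_gt0.
by split; nra.
Qed.

Lemma dPsi_gt0 x : 0 < x < 1 -> 0 < dPsi x.
Proof.
case/andP=> x0 x1; have [h1 h2 h3] := Psi_args_gt0 (ltW x0) x1.
have -> : dPsi x = 4 * x * (s + t) * ((1 - x) ^+ 2 * (1 - s * t) + 2 * x * (1 + s) * (1 - t)) /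
   ((1 + x ^+ 2 - 2 * x * - s) * (1 + x ^+ 2 - 2 * x * t) * (1 - x ^+ 2)).
  by rewrite /dPsi; field; rewrite !gt_eqF.
apply: divr_gt0; last by rewrite !mulr_gt0.
apply: mulr_gt0; first by rewrite !mulr_gt0.
apply: ltr_pwDl; first by rewrite mulr_gt0 ?exprn_gt0 ?subr_gt0.
apply: mulr_ge0; last by rewrite subr_ge0.
by apply: mulr_ge0; [rewrite mulr_ge0 // ltW|apply: addr_ge0].
Qed.

Lemma Psi0 : Psi 0 = 0.
Proof. by rewrite /Psi expr0n /= !(mulr0, mul0r, addr0, subr0) ln1; ring. Qed.

Lemma Psi_lt : {in `[0, 1[ &, {homo Psi : x y / x < y}}.
Proof.
have der x : 0 <= x -> x < 1 -> is_derive x 1 Psi (dPsi x).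
  by move=> x0 x1; have [] := Psi_args_gt0 x0 x1; exact: is_derive_Psi.
apply: gtr0_derive1_lt_co.
- by move=> x; rewrite in_itv /= => /andP [x0 x1]; have [] := der x (ltW x0) x1.
- move=> x; rewrite in_itv /= => /andP [x0 x1]; rewrite derive1E.
  by have [_ ->] := der x (ltW x0) x1; apply: dPsi_gt0; rewrite x0.
by apply: derivable_within_continuous => x; rewrite in_itv /= => /andP [x0 x1]; case: (der x x0 x1).
Qed.

Lemma Psi_gt0 L : 0 < L < 1 -> 0 < Psi L.
Proof.
case/andP=> L0 L1; rewrite -Psi0 Psi_lt // in_itv /= ?lexx ?ltW //.
by rewrite (lt_trans L0 L1).
Qed.

Lemma Psi_le L b : 0 <= L <= b -> b < 1 -> Psi L <= Psi b.
Proof.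
case/andP=> L0; rewrite le_eqVlt => /orP [/eqP -> //|Lb] b1.
by rewrite ltW // Psi_lt // in_itv /= ?L0 ?b1 ?(lt_trans Lb b1) // ltW // (le_lt_trans L0 Lb).
Qed.

End LogGain.

(* [ln W_c] grows by [ln (gain a c)] in a half-step, so this bounds from below the growth
   of the potential [lam ln W_x + mu ln W_y] at half-steps with [|a| >= L]. *)
Lemma log_gain_ge (R : realType) (x y L : R) : -1 <= x <= 0 -> 0 <= y <= 1 -> -1 < x * y ->
  0 < L -> exists lam mu delta : R, [/\ 0 <= lam, 0 <= mu, 0 < delta &
    forall a, L <= `|a| -> 0 < 1 - a ^+ 2 ->
      delta <= lam * ln (gain a x) + mu * ln (gain a y)].
Proof.
case/andP=> x1 x0 /andP [y0 y1] xy L0.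
have a_lt1 (a : R) : 0 < 1 - a ^+ 2 -> `|a| < 1.
  by move=> a1; rewrite ltr_norml; apply/andP; split; nra.
case: (lerP 1 L) => L1.
  by exists 1, 0, 1; split => // a La /a_lt1; rewrite ltNge (le_trans L1 La).
have L01 : 0 < L < 1 by rewrite L0.
have Psi_ge (s t b : R) : 0 <= s <= 1 -> 0 <= t <= 1 -> 0 < s + t -> s * t < 1 ->
    L <= b -> 0 < 1 - b ^+ 2 ->
    Psi s t L <= t * ln (gain b (- s)) + s * ln (gain b t).
  move=> /andP [s0 s1] /andP [t0 t1] st0 st1 Lb b1.
  have b0 : 0 <= b by rewrite (le_trans (ltW L0)).
  rewrite !ln_gain ?normrN ?ger0_norm //.
  apply: le_trans (@Psi_le _ _ _ s0 t1 st0 st1 L b _ _) _; first by rewrite (ltW L0) Lb.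
    by rewrite -(ger0_norm b0) a_lt1.
  by rewrite /Psi le_eqVlt; apply/orP; left; apply/eqP; ring.
have sqr_norm (a : R) : `|a| ^+ 2 = a ^+ 2 by rewrite real_normK ?num_real.
case: (eqVneq x 0) => [->|xn0].
  exists 1, 0, (Psi 0 1 L); split; rewrite ?Psi_gt0 ?add0r ?mul0r ?ltr01 // => a La a1.
  have -> : gain a 0 = gain `|a| (- 0).
    by case: (lerP 0 a) => a0; [rewrite ger0_norm ?oppr0 | rewrite ltr0_norm ?gainNN].
  have := @Psi_ge 0 1 `|a|; rewrite !mul0r !addr0 add0r ler01 lexx ltr01 sqr_norm.
  by apply => //; rewrite lexx.
set s := - x.
have s01 : 0 <= s <= 1 by rewrite /s; apply/andP; split; lra.
have s0 : 0 < s by rewrite oppr_gt0 lt_neqAle xn0.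
have st0 : 0 < s + y by lra.
have st1 : s * y < 1 by rewrite /s; lra.
have ts1 : y * s < 1 by rewrite mulrC.
have y01 : 0 <= y <= 1 by rewrite y0.
exists y, s, (Num.min (Psi s y L) (Psi y s L)); split => //; first exact: ltW.
  by rewrite lt_min !Psi_gt0 // 1?addrC ?(ltW s0) //; case/andP: s01.
move=> a La a1; rewrite ge_min; case: (lerP 0 a) => a0; apply/orP; [left|right].
  rewrite ger0_norm // in La.
  by have := @Psi_ge s y a s01 y01 st0 st1 La a1; rewrite /s opprK.
rewrite ltr0_norm // in La; rewrite -[gain a x]gainNN -[gain a y]gainNN addrC.
by apply: (@Psi_ge y s (- a) y01 s01); rewrite ?sqrrN // addrC.
Qed.

Section RayleighDecay.
Variables (R : realType) (n : nat) (d : 'I_n -> R).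
Variables (B : nat -> 'M[R]_n) (u : nat -> 'cV[R]_n) (x y z : R).
Hypotheses (dB : forall t, orth_sympart d (B t))
  (u_next : forall t, u t.+1 = half_step (B t) (u t))
  (u0 : wnorm2 (fun=> 1) (u 0) = 1).
Hypotheses (z1 : `|z| < 1) (Wz : 0 < level_mass d z (u 0)).
Hypotheses (x_range : -1 <= x <= 0) (y_range : 0 <= y <= 1) (xy : -1 < x * y)
  (Wx : 0 < level_mass d x (u 0)) (Wy : 0 < level_mass d y (u 0)).

Let rq t := wnorm2 d (u t).

Lemma unit_level_mass t : wnorm2 (fun=> 1) (u t) = 1 /\ 0 < level_mass d z (u t).
Proof.
elim: t => [//|t [u1 Wzt]]; have a1 := rayleigh_lt1 (dB t) u1 z1 Wzt.
rewrite u_next (half_step_unit (dB t) u1 a1) (level_mass_half_step (dB t) u1).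
by split => //; rewrite mulr_gt0 // gain_gt0 ?ltW.
Qed.

Lemma rq_lt1 t : 0 < 1 - rq t ^+ 2.
Proof. by have [u1 Wzt] := unit_level_mass t; exact: (rayleigh_lt1 (dB t) u1 z1 Wzt). Qed.

Lemma level_mass_next c t : level_mass d c (u t.+1) = gain (rq t) c * level_mass d c (u t).
Proof. by have [u1 _] := unit_level_mass t; rewrite u_next (level_mass_half_step (dB t) u1). Qed.

Lemma level_mass_gt0 c t : `|c| <= 1 -> 0 < level_mass d c (u 0) -> 0 < level_mass d c (u t).
Proof.
move=> c1 W0; elim: t => [//|t IH].
by rewrite level_mass_next mulr_gt0 // gain_gt0 // rq_lt1.
Qed.

Lemma abs_rq_le t t' : (t <= t')%N -> `|rq t'| <= `|rq t|.
Proof.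
move=> /subnK <-; elim: (t' - t)%N => [|k IH]; rewrite ?add0n //.
apply: le_trans IH; rewrite addSn /rq u_next.
by have [u1 _] := unit_level_mass (k + t); apply: abs_rayleigh_half_step (rq_lt1 _).
Qed.

(* The potential [lam ln W_x + mu ln W_y] is nonpositive, but it would grow without
   bound if [|rq t|] stayed above [L]. *)
Lemma rq_small L : 0 < L -> exists t, `|rq t| < L.
Proof.
move=> L0; have [lam [mu [delta [lam0 mu0 delta0 grow]]]] := log_gain_ge x_range y_range xy L0.
have [x1 y1] : `|x| <= 1 /\ `|y| <= 1.
  by case/andP: x_range => *; case/andP: y_range => *; rewrite !ler_norml; split; lra.
pose Phi t := lam * ln (level_mass d x (u t)) + mu * ln (level_mass d y (u t)).
have Phi_le0 t : Phi t <= 0.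
  have [u1 _] := unit_level_mass t.
  have lnW_le0 c : ln (level_mass d c (u t)) <= 0 by apply: ln_le0; rewrite -u1 level_mass_le.
  by have := mulr_ge0_le0 lam0 (lnW_le0 x); have := mulr_ge0_le0 mu0 (lnW_le0 y); rewrite /Phi; lra.
apply: contrapT => /forallNP never.
have Phi_next t : Phi t + delta <= Phi t.+1.
  have Lt : L <= `|rq t| by rewrite leNgt; apply/negP; exact: never.
  have := grow (rq t) Lt (rq_lt1 t).
  have [gx gy] := (gain_gt0 x1 (rq_lt1 t), gain_gt0 y1 (rq_lt1 t)).
  have [Wxt Wyt] := (level_mass_gt0 t x1 Wx, level_mass_gt0 t y1 Wy).
  rewrite /Phi !level_mass_next [ln (gain _ x * _)]lnM ?posrE //.
  by rewrite [ln (gain _ y * _)]lnM ?posrE // !mulrDr; lra.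
have Phi_ge t : Phi 0 + t%:R * delta <= Phi t.
  elim: t => [|t IH]; first by rewrite mul0r addr0.
  by apply: le_trans (Phi_next t); rewrite -nat1r mulrDl mul1r; lra.
pose t := (Num.Def.trunc (- Phi 0 / delta)).+1.
have := truncnS_gt (- Phi 0 / delta); rewrite ltr_pdivrMr // -/t => tbig.
by have := Phi_ge t; have := Phi_le0 t; lra.
Qed.

Lemma rq_cvg0 L : 0 < L -> exists N, forall t, (N <= t)%N -> `|rq t| < L.
Proof.
by move=> /rq_small [N small]; exists N => t /abs_rq_le /le_lt_trans; apply.
Qed.

End RayleighDecay.

Section AciHalfSteps.
Variables (R : realType) (n : nat) (A : 'M[R]_n) (v0 : 'cV[R]_n).

Fixpoint aci_half (t : nat) : 'cV[R]_n :=
  if t is t'.+1 then half_step (if odd t' then A^T else A) (aci_half t') else v0.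

Lemma aci_half_double k : aci_half k.*2 = aci A v0 k.
Proof. by elim: k => // k IH; rewrite doubleS /= odd_double /= IH aci_stepE. Qed.

End AciHalfSteps.

Section LimitVector.
Variables (R : realType) (n : nat).
Implicit Types (g : 'I_n -> R) (x y : 'cV[R]_n).

Lemma wnorm2_lipschitz g x y (e : R) : (forall i, `|g i| <= 1) ->
  wnorm2 (fun=> 1) x = 1 -> vnorm (x - y) < e -> e <= 1 ->
  `|wnorm2 g x - wnorm2 g y| <= 3 * n%:R * e.
Proof.
move=> g1 x1 xye e1; have x1' : vnorm x = 1 by apply: vnorm_eq1.
rewrite /wnorm2 -sumrB (le_trans (ler_norm_sum _ _ _)) //.
have -> : 3 * n%:R * e = \sum_(i < n) (3 * e).
  by rewrite sumr_const card_ord -mulr_natl; ring.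
apply: ler_sum => i _.
have xi : `|x i ord0| <= 1 by rewrite -x1' coord_le_vnorm.
have xyi : `|x i ord0 - y i ord0| <= e.
  by apply/ltW/(le_lt_trans _ xye); have := coord_le_vnorm (x - y) i; rewrite !mxE.
have xpyi : `|x i ord0 + y i ord0| <= 3.
  have := ler_normD (x i ord0) (y i ord0); have := ler_normB (x i ord0) (x i ord0 - y i ord0).
  by rewrite opprB addrC subrK; lra.
rewrite -mulrBr (_ : _ ^+ 2 - _ ^+ 2 = (x i ord0 - y i ord0) * (x i ord0 + y i ord0)); last by ring.
rewrite !normrM -[3 * e]mul1r; apply: ler_pM; rewrite ?mulr_ge0 //.
by rewrite mulrC; apply: ler_pM.
Qed.

Lemma limit_vector_wnorm2 g (u : nat -> 'cV[R]_n) w (r : R) :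
  (forall i, `|g i| <= 1) -> (forall k, wnorm2 (fun=> 1) (u k) = 1) ->
  is_limit_vector u w ->
  (forall L, 0 < L -> exists N, forall k, (N <= k)%N -> `|wnorm2 g (u k) - r| < L) ->
  wnorm2 g w = r.
Proof.
move=> g1 u1 uw ur; apply/eqP; rewrite -subr_eq0 -normr_eq0; apply/negPn/negP => ne0.
set q := `|wnorm2 g w - r|; have q0 : 0 < q by rewrite normr_gt0 -normr_eq0.
have [N close] := ur (q / 2) ltac:(by rewrite divr_gt0).
have [K [K0 KE]] : exists K : R, 0 <= K /\ 3 * n%:R = K.
  by exists (3 * n%:R); rewrite mulr_ge0 ?ler0n.
set e := Num.min 1 (q / (2 * (K + 1))).
have e0 : 0 < e by rewrite lt_min ltr01 /= divr_gt0 //; lra.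
have [e1 e2] : e <= 1 /\ e <= q / (2 * (K + 1)) by split; rewrite ge_min lexx ?orbT.
have Ke : K * e < q / 2.
  apply: le_lt_trans (ler_wpM2l K0 e2) _.
  by rewrite mulrA ltr_pdivrMr ?mulr_gt0 //; lra.
have [k [Nk uwk]] := uw e e0 N.
have := wnorm2_lipschitz g1 (u1 k) uwk e1; rewrite KE distrC; have := close k Nk.
have := ler_normD (wnorm2 g w - wnorm2 g (u k)) (wnorm2 g (u k) - r).
by rewrite addrA subrK -/q; lra.
Qed.

End LimitVector.

Section OperatorNorm.
Variables (R : realType) (n : nat).
Implicit Types (B : 'M[R]_n) (x : 'cV[R]_n).

Lemma vnormE x : vnorm x = Num.sqrt ((x^T *m x) ord0 ord0).
Proof. by rewrite /vnorm mxE; congr Num.sqrt; apply: eq_bigr => i _; rewrite mxE expr2. Qed.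

Lemma vnorm_orth B x : B^T *m B = 1%:M -> vnorm (B *m x) = vnorm x.
Proof. by move=> BO; rewrite !vnormE trmx_mul mulmxA -(mulmxA _ B^T) BO mulmx1. Qed.

Lemma opnorm_orth B x0 : B^T *m B = 1%:M -> vnorm x0 = 1 -> opnorm B = 1.
Proof.
move=> BO x01; rewrite /opnorm (_ : [set _ | _ in _]%classic = [set 1]%classic) ?sup1 //.
apply/seteqP; split => [_ [x /= x1 <-]|_ ->] /=; first by rewrite vnorm_orth.
by exists x0; rewrite //= vnorm_orth.
Qed.

(* Shifting by [alpha] cannot decrease the norm of a coordinate vector [e_i]
   with [alpha d_i <= 0]; such [e_i] exist for both signs of [alpha]. *)
Lemma opnorm_shift_ge1 d B (al : R) : orth_sympart d B ->
  (exists i, d i <= 0) -> (exists j, 0 <= d j) -> 1 <= opnorm (B - al%:M).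
Proof.
move=> dB [i di] [j dj]; rewrite /opnorm.
set S := [set _ | _ in _]%classic.
have d1 k : -1 <= d k <= 1 by rewrite -ler_norml (orth_sympart_norm_le1 k dB).
have shift_sqr x : vnorm x = 1 ->
    vnorm ((B - al%:M) *m x) ^+ 2 = 1 + al ^+ 2 - 2 * al * wnorm2 d x.
  by move=> x1; apply: vnorm_shift_sqr; rewrite // -vnorm_sqr x1 expr1n.
have S_ub : has_ubound S.
  exists (1 + `|al|) => _ [x /= x1 <-].
  have [a1 a2] : -1 <= wnorm2 d x /\ wnorm2 d x <= 1.
    have u1 : wnorm2 (fun=> 1) x = 1 by rewrite -vnorm_sqr x1 expr1n.
    split; last by rewrite -u1 ler_wnorm2 // => k; case/andP: (d1 k).
    have : wnorm2 (fun=> -1 * 1) x <= wnorm2 d x.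
      by apply: ler_wnorm2 => k; rewrite mulr1; case/andP: (d1 k).
    by rewrite wnorm2Zl u1 mulr1.
  rewrite -(@ler_pXn2r _ 2) ?nnegrE ?vnorm_ge0 ?addr_ge0 // shift_sqr //.
  by case: (lerP 0 al) => al0; [rewrite ger0_norm | rewrite ltr0_norm]; nra.
have e_in k : vnorm ((B - al%:M) *m delta_mx k ord0) \in S.
  by apply/mem_set; exists (delta_mx k ord0) => //=; apply: vnorm_eq1; rewrite wnorm2_delta.
have e_ge1 k : al * d k <= 0 -> 1 <= vnorm ((B - al%:M) *m delta_mx k ord0).
  move=> alk; rewrite -(@ler_pXn2r _ 2) ?nnegrE ?vnorm_ge0 // shift_sqr ?wnorm2_delta.
    by rewrite expr1n; nra.
  by apply: vnorm_eq1; rewrite wnorm2_delta.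
case: (lerP 0 al) => al0.
  by apply: le_trans (e_ge1 i _) (ub_le_sup S_ub (set_mem (e_in i))); nra.
by apply: le_trans (e_ge1 j _) (ub_le_sup S_ub (set_mem (e_in j))); nra.
Qed.

End OperatorNorm.

Section BlockIndices.
Variables (b0 b1 : bool) (m : nat).
Local Notation N := (dimA b0 m b1).
Local Notation blk := (blockOf b0 m).
Local Notation pos := (posOf b0 m).

Lemma blockOf_cases i : (i < N)%N ->
 [\/ [/\ b0, i = 0%N, blk i = 0%N & pos i = false],
     [/\ (b0 <= i)%N, (i - b0 < m.*2)%N, blk i = ((i - b0)./2).+1 & pos i = odd (i - b0)] |
     [/\ i = (b0 + m.*2)%N, b1, blk i = m.+1 & pos i = false]].
Proof.
rewrite /dimA /blockOf /posOf; case: b0 => /= iN.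
  case: eqP => [->|/eqP i0]; first by constructor 1.
  case: ltnP => ?; first by constructor 2; split => //; lia.
  by constructor 3; split => //; [lia | case: b1 iN => //=; lia].
rewrite subn0; case: ltnP => ?; first by constructor 2; rewrite ?subn0.
by constructor 3; split => //; [lia | case: b1 iN => //=; lia].
Qed.

Lemma blockOf_le i : (i < N)%N -> (blk i <= m.+1)%N.
Proof. by case/blockOf_cases => -[_ im2 -> _] //; rewrite ltnS ltnW // ltn_half_double. Qed.

Lemma blockOf_posOf_inj i k : (i < N)%N -> (k < N)%N ->
  blk i = blk k -> pos i = pos k -> i = k.
Proof.
move=> /blockOf_cases + /blockOf_cases.
by do 2![case=> -[? ? -> ->]]; try lia.
Qed.

Lemma posOf_nonrot i : (i < N)%N -> ~~ (1 <= blk i <= m)%N -> pos i = false.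
Proof.
case/blockOf_cases => -[_ im2 -> //].
by rewrite -ltn_half_double in im2; lia.
Qed.

Definition partner i := if pos i then i.-1 else i.+1.

Lemma partner_spec i : (i < N)%N -> (1 <= blk i <= m)%N ->
  [/\ (partner i < N)%N, blk (partner i) = blk i & pos (partner i) = ~~ pos i].
Proof.
move=> iN; rewrite /partner.
case: (blockOf_cases iN) => -[i1 i2 bi ->]; rewrite bi; try lia.
have := odd_double_half (i - b0); case: (boolP (odd (i - b0))) => oi /= halfE _.
- have pN : (i.-1 < N)%N by lia.
  case: (blockOf_cases pN) => -[? ? -> ->]; try lia.
  by rewrite (_ : i.-1 - b0 = ((i - b0)./2).*2)%N ?odd_double ?doubleK //; lia.
- have pN : (i.+1 < N)%N by move: halfE; rewrite /dimA; lia.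
  case: (blockOf_cases pN) => -[? ? -> ->]; try lia.
  rewrite (_ : i.+1 - b0 = true + ((i - b0)./2).*2)%N; last by lia.
  by rewrite half_bit_double oddD odd_double.
Qed.

Lemma same_block i k : (i < N)%N -> (k < N)%N -> blk k = blk i ->
  k = i \/ (1 <= blk i <= m)%N /\ k = partner i.
Proof.
move=> iN kN bki; case: (eqVneq (pos k) (pos i)) => pki.
  by left; apply: blockOf_posOf_inj.
case: (boolP (1 <= blk i <= m)%N) => rot; last first.
  by move: pki; rewrite (posOf_nonrot iN rot) posOf_nonrot // bki.
have [pN bp pp] := partner_spec iN rot; right; split => //.
by apply: blockOf_posOf_inj; rewrite ?bp ?pp //; move: pki; case: (pos k); case: (pos i).
Qed.

End BlockIndices.

Section BlockRotation.
Variables (R : realType) (b0 b1 : bool) (m : nat) (c s : nat -> R).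
Local Notation N := (dimA b0 m b1).
Local Notation A := (Amat b0 m b1 c s).
Local Notation blk := (blockOf b0 m).
Local Notation pos := (posOf b0 m).
Implicit Types i k : 'I_N.

Definition dA (i : 'I_N) : R := cext m c (blk i).

Lemma cext_rot j : (1 <= j <= m)%N -> cext m c j = c j.
Proof.
move=> jm; rewrite /cext; have [j0|_] := eqVneq j 0%N; first by rewrite j0 in jm.
by have [jm1|//] := eqVneq j m.+1; rewrite jm1 ltnn andbF in jm.
Qed.

Lemma cext_sqr_nonrot j : (j <= m.+1)%N -> ~~ (1 <= j <= m)%N -> cext m c j ^+ 2 = 1.
Proof.
move=> jm rot; rewrite /cext; have [_|j0] := eqVneq j 0%N; first by rewrite sqrrN expr1n.
have [_|jm1] := eqVneq j m.+1; first by rewrite expr1n.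
by move: rot; rewrite lt0n j0 -ltnS ltn_neqAle jm1 jm.
Qed.

Lemma Amat_diag i : A i i = dA i.
Proof. by rewrite mxE !eqxx. Qed.

Lemma Amat_offblock i k : blk i != blk k -> A i k = 0.
Proof. by rewrite mxE => /negbTE ->. Qed.

Lemma Amat_pair i k : blk i = blk k -> pos i != pos k ->
  A i k = if pos i then - s (blk i) else s (blk i).
Proof. by rewrite mxE => -> /negbTE ->; rewrite eqxx; case: (pos i). Qed.

Lemma Amat_support i k : A i k != 0 -> dA i = dA k.
Proof.
move=> Aik; rewrite /dA; case: (eqVneq (blk i) (blk k)) => [->|/Amat_offblock A0] //.
by rewrite A0 eqxx in Aik.
Qed.

Lemma Amat_sympart : A + A^T = diagf (fun i => 2 * dA i).
Proof.
apply/matrixP => i k; rewrite [LHS]mxE [A^T i k]mxE [RHS]mxE [(\row__ _) _ _]mxE.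
case: (eqVneq i k) => [->|ik]; first by rewrite Amat_diag mulr1n; ring.
rewrite mulr0n; case: (eqVneq (blk i) (blk k)) => bik; last first.
  by rewrite (Amat_offblock bik) Amat_offblock ?addr0 // eq_sym.
case: (eqVneq (pos i) (pos k)) => pik.
  by move: ik; rewrite (val_inj (blockOf_posOf_inj (ltn_ord i) (ltn_ord k) bik pik)) eqxx.
rewrite (Amat_pair bik pik) (Amat_pair (esym bik)) 1?eq_sym // -bik.
by move: pik; case: (pos i); case: (pos k) => //= _; ring.
Qed.

Definition partner_ord (i : 'I_N) : 'I_N := insubd i (partner b0 m i).

Lemma partner_ord_spec i : (1 <= blk i <= m)%N ->
  [/\ partner_ord i != i, blk (partner_ord i) = blk i & pos (partner_ord i) = ~~ pos i].
Proof.
move=> rot; have [pN bp pp] := partner_spec (ltn_ord i) rot.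
have pE : (partner_ord i : nat) = partner b0 m i by rewrite val_insubd pN.
rewrite pE bp pp; split => //.
by apply/eqP => pi; move: pp; rewrite -pE pi; case: (pos i).
Qed.

Lemma sum_block (F : 'I_N -> R) i : (forall j : 'I_N, blk j != blk i -> F j = 0) ->
  \sum_j F j = F i + (if (1 <= blk i <= m)%N then F (partner_ord i) else 0).
Proof.
move=> F0; rewrite (bigD1 i) //=; congr (_ + _).
have others j : j != i -> blk j = blk i -> (1 <= blk i <= m)%N /\ j = partner_ord i.
  move=> ji bji; case: (same_block (ltn_ord i) (ltn_ord j) bji) => [/val_inj/eqP|[rot jp]].
    by rewrite (negbTE ji).
  by split => //; apply: val_inj => /=; rewrite val_insubd -jp ltn_ord.
case: ifP => rot.
  have [pi _ _] := partner_ord_spec rot.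
  rewrite (bigD1 (partner_ord i)) ?pi //= big1 ?addr0 // => j /andP [ji jp].
  by rewrite F0 //; apply: contra jp => /eqP bji; have [_ ->] := others j ji bji.
rewrite big1 // => j ji; rewrite F0 //; apply/eqP => bji.
by have [] := others j ji bji; rewrite rot.
Qed.

Hypothesis cs1 : forall j, (1 <= j <= m)%N -> c j ^+ 2 + s j ^+ 2 = 1.

Lemma Amat_orth : A^T *m A = 1%:M.
Proof.
apply/matrixP => i k; rewrite !mxE; under eq_bigr => j _ do rewrite mxE.
case: (eqVneq (blk k) (blk i)) => bki; last first.
  rewrite big1 => [|j _]; last first.
    case: (eqVneq (blk j) (blk i)) => bji; last by rewrite Amat_offblock ?mul0r.
    by rewrite (@Amat_offblock j k) ?mulr0 // bji eq_sym.
  by case: eqVneq => // ik; move: bki; rewrite ik eqxx.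
rewrite (sum_block (i := i)) => [|j bji]; last by rewrite Amat_offblock ?mul0r.
case: ifP => rot; last first.
  case: (same_block (ltn_ord i) (ltn_ord k) bki) => [/val_inj ->|[]]; last by rewrite rot.
  rewrite eqxx mulr1n Amat_diag addr0 -expr2 /dA cext_sqr_nonrot ?rot //.
  exact: blockOf_le (ltn_ord i).
have [pi bp pp] := partner_ord_spec rot.
have pos_ne : pos i != ~~ pos i by case: (pos i).
have Aip : A i (partner_ord i) = if pos i then - s (blk i) else s (blk i).
  by rewrite Amat_pair ?pp.
have Api : A (partner_ord i) i = if pos i then s (blk i) else - s (blk i).
  by rewrite Amat_pair ?pp ?bp 1?eq_sym //; case: (pos i).
rewrite Amat_diag /dA cext_rot //.
case: (same_block (ltn_ord i) (ltn_ord k) bki) => [/val_inj ->|[_ kp]].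
  by rewrite eqxx mulr1n Amat_diag /dA cext_rot // Api -(cs1 rot); case: (pos i); ring.
have -> : k = partner_ord i.
  by apply: val_inj => /=; rewrite val_insubd -kp ltn_ord.
rewrite eq_sym (negbTE pi) mulr0n Aip Api Amat_diag /dA bp cext_rot //.
by case: (pos i); ring.
Qed.

Lemma Amat_orth_sympart : orth_sympart dA A.
Proof. by split; [exact: Amat_orth | exact: Amat_sympart | exact: Amat_support]. Qed.

End BlockRotation.

Section OccupiedLevels.
Variables (R : realType) (b0 b1 : bool) (m : nat) (c s : nat -> R).
Variable v0 : 'cV[R]_(dimA b0 m b1).
Hypotheses (cs1 : forall j, (1 <= j <= m)%N -> c j ^+ 2 + s j ^+ 2 = 1)
  (s_neq0 : forall j, (1 <= j <= m)%N -> s j != 0).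
Local Notation d := (@dA R b0 b1 m c).

Lemma level_mass_blk_nz j : blk_nz v0 j -> 0 < level_mass d (cext m c j) v0.
Proof.
case=> i [bi vi]; rewrite /level_mass /wnorm2 (bigD1 i) //= ltr_pwDl //.
  by rewrite /dA bi eqxx mul1r exprn_even_gt0.
by apply: sumr_ge0 => k _; apply: mulr_ge0; [case: eqP | rewrite sqr_ge0].
Qed.

Lemma cext_blk_nz_le1 j : blk_nz v0 j -> `|cext m c j| <= 1.
Proof. by case=> i [<- _]; apply: orth_sympart_norm_le1 (Amat_orth_sympart b0 b1 cs1). Qed.

Lemma cext_rot_lt1 l : (1 <= l <= m)%N -> `|cext m c l| < 1.
Proof.
move=> rot; have := s_neq0 rot; have := cs1 rot; rewrite cext_rot // => cs.
rewrite -sqrf_eq0 => s2; have := sqr_ge0 (s l); rewrite -(ltr_pXn2r (_ : 0 < 2)%N) ?nnegrE //.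
by rewrite real_normK ?num_real // expr1n; rewrite le_eqVlt eq_sym (negbTE s2) /=; lra.
Qed.

(* A rotation level [c_l] and a level [c_j] of opposite sign give the two occupied
   levels [x <= 0 <= y] of the potential, and [c_l] itself keeps [|a| < 1]. *)
Lemma opposite_levels : (exists l, [/\ (1 <= l <= m)%N, blk_nz v0 l &
     exists j, blk_nz v0 j /\ cext m c l * cext m c j <= 0]) ->
  exists x y z : R, [/\ -1 <= x <= 0, 0 <= y <= 1, -1 < x * y,
    0 < level_mass d x v0 /\ 0 < level_mass d y v0 &
    `|z| < 1 /\ 0 < level_mass d z v0].
Proof.
case=> l [rot nzl [j [nzj lj]]]; have cl_lt1 := cext_rot_lt1 rot.
have := cl_lt1; have := cext_blk_nz_le1 nzj.
have [Wl Wj] := (level_mass_blk_nz nzl, level_mass_blk_nz nzj).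
set cl := cext m c l in lj Wl cl_lt1 *; set cj := cext m c j in lj Wj *.
rewrite ltr_norml ler_norml => /andP [cj1 cj2] /andP [cl1 cl2].
have [clj|cjl] := lerP cl cj; [exists cl, cj, cl | exists cj, cl, cl];
  by split => //; try apply/andP; try split; nra.
Qed.

End OccupiedLevels.

Unset Implicit Arguments. Set Strict Implicit.

Theorem mainTheorem15 (R : realType) (b0 b1 : bool) (m : nat) (c s : nat -> R)
  (v0 : 'cV[R]_(dimA b0 m b1)) :
  (1 <= m)%N ->
  (forall j, (1 <= j <= m)%N -> c j ^+ 2 + s j ^+ 2 = 1) ->
  (forall j, (1 <= j <= m)%N -> s j != 0) ->
  (forall j, (j <= m)%N -> cext m c j < cext m c j.+1) ->
  vnorm v0 = 1 ->
  (2 <= grade (Amat b0 m b1 c s) v0)%N ->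
  (exists l, [/\ (1 <= l <= m)%N, blk_nz v0 l &
     exists j, blk_nz v0 j /\ cext m c l * cext m c j <= 0]) ->
  forall vs : 'cV[R]_(dimA b0 m b1),
    is_limit_vector (aci (Amat b0 m b1 c s) v0) vs ->
    [/\ qform (Amat b0 m b1 c s) vs vs = 0,
        vnorm (Amat b0 m b1 c s *m vs) ^+ 2 - (qform (Amat b0 m b1 c s) vs vs) ^+ 2 = 1,
        (forall alpha : R, opnorm (Amat b0 m b1 c s) <= opnorm (Amat b0 m b1 c s - alpha%:M)),
        opnorm (Amat b0 m b1 c s) = 1 &
        vnorm (Amat b0 m b1 c s *m vs) = 1].
Proof.
move=> _ cs1 s_neq0 _ v01 _ /(opposite_levels cs1 s_neq0).
move=> [x [y [z [xr yr xy [Wx Wy] [z1 Wz]]]]] vs vs_lim.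
set A := Amat b0 m b1 c s; set d := @dA R b0 b1 m c.
have Aorth := Amat_orth_sympart b0 b1 cs1; have [AO AD _] := Aorth.
have dB t : orth_sympart d (if odd t then A^T else A).
  by case: (odd t); [apply: orth_sympart_tr|].
have u0 : wnorm2 (fun=> 1) v0 = 1 by rewrite -vnorm_sqr v01 expr1n.
have decay := rq_cvg0 (u := aci_half A v0) dB (fun=> erefl) u0 z1 Wz xr yr xy Wx Wy.
have unit k : wnorm2 (fun=> 1) (aci A v0 k) = 1.
  rewrite -aci_half_double.
  by case: (unit_level_mass (u := aci_half A v0) dB (fun=> erefl) u0 z1 Wz k.*2).
have vs1 : wnorm2 (fun=> 1) vs = 1.
  apply: (limit_vector_wnorm2 _ unit vs_lim) => [i|L L0]; first by rewrite normr1.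
  by exists 0%N => k _; rewrite unit subrr normr0.
have vs0 : wnorm2 d vs = 0.
  apply: (limit_vector_wnorm2 _ unit vs_lim) => [i|L /decay [N small]].
    exact: orth_sympart_norm_le1 Aorth.
  by exists N => k Nk; rewrite subr0 -aci_half_double small // -addnn (leq_trans Nk) ?leq_addl.
have [[i xi] [j yj]] := (level_mass_gt0_level Wx, level_mass_gt0_level Wy).
have opA1 : opnorm A = 1 := opnorm_orth AO v01.
have qA0 : qform A vs vs = 0 by rewrite (qform_sympart _ AD).
have nA1 : vnorm (A *m vs) = 1 by rewrite vnorm_orth // vnorm_eq1.
split => // [|al]; first by rewrite nA1 qA0 expr1n expr0n subr0.
rewrite opA1 (opnorm_shift_ge1 al Aorth) //.
  by exists i; rewrite xi; case/andP: xr.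
by exists j; rewrite yj; case/andP: yr.
Qed.
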